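(* Let $k$ be an algebraically closed field of characteristic zero. Let $s,m,d$ be nonnegative integers with $d\ge m-1$. Let $X\subset\mathbb{P}^2_k$ be a generic union of an $m$-multiple point $mP$ and $s$ $2$-dots $Z_1,\dots,Z_s$. Then $X$ has good postulation in degree $d$, i.e. $$h^0(\mathcal{I}_X(d))=\max\left\{\binom{d+2}{2}-\binom{m+1}{2}-2s,\,0\right\}.$$
   Context: For a point $P\in\mathbb{P}^2$ and an integer $m\ge 1$, the $m$-multiple point $mP$ is the zero-dimensional subscheme defined by the ideal sheaf $\mathcal{I}_P^m$ (for $m=0$ it is empty); it has length $\binom{m+1}{2}$. A double point is $2P$. A $2$-dot is a subscheme of length $2$ of a double point (i.e. a point together with a tangent direction). ''Generic union'' means the point $P$ and the $2$-dots are chosen generically (in a nonempty open subset of the corresponding parameter space). $\mathcal{I}_X$ is the ideal sheaf of $X$ and $h^0(\mathcal{F})=\dim_k H^0(\mathbb{P}^2,\mathcal{F})$. *)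

From HB Require Import structures.
From mathcomp Require Import all_boot all_order all_algebra.
From mathcomp Require Import mpoly.
Set Implicit Arguments. Unset Strict Implicit. Unset Printing Implicit Defensive.
Import Order.TTheory GRing.Theory.
Local Open Scope ring_scope.

Section Postulation.
Variable k : fieldType.

(* Homogeneous coordinates of a point of P^2 (or of a vector of k^3). *)
Definition vec3 := 'I_3 -> k.

(* Monomials of degree exactly d in x_0, x_1, x_2: a basis of H^0(O(d)). *)
Definition hmon (d : nat) := {mu : 'X_{1..3 < d.+1} | mdeg mu == d}.

Definition form_of (d : nat) (c : {ffun hmon d -> k^o}) : {mpoly k[3]} :=
  \sum_(mu : hmon d) c mu *: 'X_[(val mu : 'X_{1..3})].

(* Index set of the linear conditions imposed by X = mP + Z_1 + ... + Z_s:
   - inl a  (a multi-index of order < m): the partial derivative d^a F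
     vanishes at P   (F in I_P^m);
   - inr (i, false): F(Q_i) = 0;
   - inr (i, true) : the derivative of F at Q_i in the direction V_i is 0
     (the 2-dot supported at Q_i with tangent direction V_i). *)
Definition cond (m s : nat) := ('X_{1..3 < m} + 'I_s * bool)%type.

Definition cond_val (m s : nat) (P : vec3) (Q V : 'I_s -> vec3)
    (F : {mpoly k[3]}) (j : cond m s) : k :=
  match j with
  | inl a => (F^`M[(a : 'X_{1..3})]).@[P]
  | inr (i, false) => F.@[Q i]
  | inr (i, true) => \sum_(l < 3) V i l * (F^`M(l)).@[Q i]
  end.

Definition ev_map (d m s : nat) (P : vec3) (Q V : 'I_s -> vec3)
    (c : {ffun hmon d -> k^o}) : {ffun cond m s -> k^o} :=
  [ffun j => cond_val P Q V (form_of c) j].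

Definition h0_IX (d m s : nat) (P : vec3) (Q V : 'I_s -> vec3) : nat :=
  \dim (lker (linfun (@ev_map d m s P Q V))).

(* Parameter space (affine): x in k^(6s+3) encodes P (coords 0..2),
   and for each i < s the support point Q_i (coords 3+6i .. 5+6i) and the
   tangent direction V_i (coords 6+6i .. 8+6i) of the i-th 2-dot. *)
Definition par_P (s : nat) (x : 'I_(6 * s + 2).+1 -> k) : vec3 :=
  fun j => x (inord j).
Definition par_Q (s : nat) (x : 'I_(6 * s + 2).+1 -> k) : 'I_s -> vec3 :=
  fun i j => x (inord (3 + 6 * i + j)).
Definition par_V (s : nat) (x : 'I_(6 * s + 2).+1 -> k) : 'I_s -> vec3 :=
  fun i j => x (inord (6 + 6 * i + j)).

End Postulation.
Arguments h0_IX {k} d m s P Q V.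

(* Lower bound: as d >= m - 1, Euler's formula shows that the derivatives of order < m - 1 of
   a form of degree d vanish at P as soon as those of order m - 1 do, so X imposes at most
   C(m+1,2) + 2s conditions.  Upper bound: with r = min(C(d+2,2), C(m+1,2) + 2s), pick r of
   the conditions and r forms; the determinant G of the matrix of the conditions evaluated on
   the forms is a polynomial in the parameters, and wherever G does not vanish the conditions
   cut the space of forms by at least r.  G is nonzero because it does not vanish at a
   configuration built greedily: P = (1:0:0), paired with the monomials x_0^(d-m+1) x^a for
   |a| = m - 1, and then one 2-dot after the other.  If the forms satisfying the conditions
   chosen so far span a space of dimension at least 2, then two independent ones f and g have
   a point q and a direction l where the Wronskian f d_l g - g d_l f does not vanish (this
   uses characteristic 0), and the 2-dot at q in the direction l adds two conditions in
   triangular position. *)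

From HB Require Import structures.
From mathcomp Require Import all_boot all_order all_algebra.
From mathcomp Require Import mpoly zify ring.
Import GRing.Theory.
Local Open Scope ring_scope.
Set Implicit Arguments. Unset Strict Implicit. Unset Printing Implicit Defensive.

(** * Polynomials over a field of characteristic zero *)

Lemma pchar0_poly_nonroot (R : idomainType) : [pchar R] =i pred0 ->
  forall p : {poly R}, p != 0 -> exists t, p.[t] != 0.
Proof.
move=> /pcharf0P R0 p p_neq0.
have natR_inj : injective (fun i : nat => i%:R : R).
  move=> i j; wlog le_ij : i j / (i <= j)%N => [IH|].
    by case: (leqP i j) => [/IH//|/ltnW/IH IH' /esym/IH'].
  move/eqP; rewrite eq_sym -subr_eq0 -natrB // R0 subn_eq0 => le_ji.
  by apply/eqP; rewrite eqn_leq le_ij.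
pose rs := [seq i%:R : R | i <- iota 0 (size p)].
have [/max_poly_roots|] := boolP (all (root p) rs).
  by rewrite p_neq0 map_inj_uniq ?iota_uniq // size_map size_iota ltnn => /(_ isT isT).
by case/allPn=> t _ pt; exists t.
Qed.

Section MpolyNonroot.
Variable R : idomainType.
Hypothesis poly_nonroot : forall p : {poly R}, p != 0 -> exists t, p.[t] != 0.

Definition mtrunc n (m : 'X_{1..n.+1}) : 'X_{1..n} :=
  [multinom m (lift ord_max i) | i < n].

Definition vext n (v : 'I_n -> R) (t : R) (i : 'I_n.+1) : R :=
  if unlift ord_max i is Some j then v j else t.

Lemma mtrunc_inj n (m m' : 'X_{1..n.+1}) :
  m ord_max = m' ord_max -> mtrunc m = mtrunc m' -> m = m'.
Proof.
move=> eq_max /mnmP eq_tr; apply/mnmP => i.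
by case: (unliftP ord_max i) => [j ->|->] //; have := eq_tr j; rewrite !mnmE.
Qed.

Lemma lift_max_widen n (i : 'I_n) : lift ord_max i = widen_ord (leqnSn n) i.
Proof. exact/val_inj/lift_max. Qed.

Lemma vext_widen n (v : 'I_n -> R) t i : vext v t (widen_ord (leqnSn n) i) = v i.
Proof. by rewrite -lift_max_widen /vext liftK. Qed.

Lemma vext_max n (v : 'I_n -> R) t : vext v t ord_max = t.
Proof. by rewrite /vext unlift_none. Qed.

Definition mcoeff_last n (p : {mpoly R[n.+1]}) (j : nat) : {mpoly R[n]} :=
  \sum_(m <- msupp p | m ord_max == j) p@_m *: 'X_[mtrunc m].

Lemma mcoeff_last_mtrunc n (p : {mpoly R[n.+1]}) m :
  (mcoeff_last p (m ord_max))@_(mtrunc m) = p@_m.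
Proof.
rewrite {2}(mpolyE p) !raddf_sum /= big_mkcond /=; apply: eq_bigr => m' _.
rewrite !mcoeffZ !mcoeffX; have [-> | neq_m'm] := eqVneq m' m; first by rewrite !eqxx.
rewrite mulr0; case: eqP => // eq_max.
case: eqP => [/(mtrunc_inj eq_max) eq_m'm|]; last by rewrite mulr0.
by rewrite eq_m'm eqxx in neq_m'm.
Qed.

Definition meval_init n (p : {mpoly R[n.+1]}) (v : 'I_n -> R) : {poly R} :=
  \sum_(m <- msupp p) (p@_m * \prod_(i < n) v i ^+ mtrunc m i) *: 'X^(m ord_max).

Lemma horner_meval_init n (p : {mpoly R[n.+1]}) v t :
  (meval_init p v).[t] = p.@[vext v t].
Proof.
rewrite mevalE horner_sum; apply: eq_bigr => m _.
rewrite hornerZ hornerXn big_ord_recr /= vext_max -mulrA; congr (_ * (_ * _)).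
by apply: eq_bigr => i _; rewrite vext_widen mnmE lift_max_widen.
Qed.

Lemma coef_meval_init n (p : {mpoly R[n.+1]}) v j :
  (meval_init p v)`_j = (mcoeff_last p j).@[v].
Proof.
rewrite coef_sum raddf_sum [RHS]big_mkcond /=; apply: eq_bigr => m _.
rewrite coefZ coefXn eq_sym; case: eqP => _; last by rewrite mulr0.
by rewrite mulr1 mevalZ mevalX.
Qed.

Lemma mpoly_nonroot n (p : {mpoly R[n]}) : p != 0 -> exists v, p.@[v] != 0.
Proof.
elim: n p => [|n IH] p p_neq0.
  have p_const : p = (p@_0%MM)%:MP.
    by apply/mpolyP => m; rewrite mcoeffC nvar0_mnmE eqxx mulr1.
  by exists (fun _ => 0); move: p_neq0; rewrite p_const mevalC mpolyC_eq0.
have /mlead_supp := p_neq0; set m := mlead p; rewrite mcoeff_msupp => pm_neq0.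
have : mcoeff_last p (m ord_max) != 0.
  apply: contraNneq pm_neq0 => /(congr1 (mcoeff (mtrunc m))).
  by rewrite mcoeff_last_mtrunc mcoeff0 => ->.
case/IH => v cv_neq0.
have : meval_init p v != 0.
  apply: contraNneq cv_neq0 => /(congr1 (fun q : {poly R} => q`_(m ord_max))).
  by rewrite coef_meval_init coef0 => ->.
by case/poly_nonroot => t; rewrite horner_meval_init; exists (vext v t).
Qed.

End MpolyNonroot.

Section RestrictLine.
Variables (R : comNzRingType) (n : nat) (a b : 'I_n -> R).

Definition restr_line (F : {mpoly R[n]}) : {poly R} :=
  mmap (@polyC R) (fun i => (a i)%:P + (b i)%:P * 'X) F.

HB.instance Definition _ :=
  GRing.RMorphism.copy restr_line (mmap (@polyC R) (fun i => (a i)%:P + (b i)%:P * 'X)).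

Lemma restr_lineC c : restr_line c%:MP = c%:P.
Proof. exact: mmapC. Qed.

Lemma restr_lineX i : restr_line 'X_i = (a i)%:P + (b i)%:P * 'X.
Proof. by rewrite /restr_line mmapX mmap1U. Qed.

Lemma horner_restr_line F t : (restr_line F).[t] = F.@[fun i => a i + t * b i].
Proof.
rewrite /restr_line /mmap mevalE horner_sum; apply: eq_bigr => m _.
rewrite hornerM hornerC /mmap1 horner_prod; congr (_ * _); apply: eq_bigr => i _.
by rewrite horner_exp !hornerE mulrC.
Qed.

Lemma deriv_restr_line F :
  (restr_line F)^`() = \sum_(l < n) (b l)%:P * restr_line F^`M(l).
Proof.
pose chain F := (restr_line F)^`() = \sum_(l < n) (b l)%:P * restr_line F^`M(l).
have chainC c : chain c%:MP.
  by rewrite /chain restr_lineC derivC big1 // => l _; rewrite mderivC rmorph0 mulr0.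
have chainD F1 F2 : chain F1 -> chain F2 -> chain (F1 + F2).
  rewrite /chain rmorphD derivD => -> ->; rewrite -big_split /=.
  by apply: eq_bigr => l _; rewrite mderivD rmorphD mulrDr.
have chainM F1 F2 : chain F1 -> chain F2 -> chain (F1 * F2).
  rewrite /chain rmorphM derivM => -> ->; rewrite big_distrl big_distrr -big_split /=.
  apply: eq_bigr => l _; rewrite mderivM rmorphD !rmorphM /=; ring.
have chainX i : chain 'X_i.
  rewrite /chain restr_lineX derivD derivC add0r derivM derivC mul0r add0r derivX mulr1.
  rewrite (bigD1 i) //= big1 ?addr0 => [|l /negbTE neq_li].
    by rewrite mderivX mnm1E eqxx -{1}[U_(i)%MM]add0m addmK mpolyX0 scale1r rmorph1 mulr1.
  by rewrite mderivX mnm1E eq_sym neq_li scale0r rmorph0 mulr0.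
suff : chain F by [].
rewrite (mpolyE F); apply: (big_ind chain) => [|//|m _]; first by rewrite -mpolyC0.
rewrite -mul_mpolyC; apply: (chainM) => //; rewrite mpolyXE_id.
apply: (big_ind chain) => [|//|i _]; first by rewrite -mpolyC1.
by elim: (m i) => [|e IH]; [rewrite expr0 -mpolyC1 | rewrite exprS; apply: (chainM)].
Qed.

End RestrictLine.

Lemma wronskian0_eq0 (R : idomainType) (phi eta : {poly R}) :
  [pchar R] =i pred0 -> phi`_0 != 0 -> eta`_0 = 0 ->
  phi * eta^`() = eta * phi^`() -> eta = 0.
Proof.
move=> /pcharf0P R0 phi0 eta0 W; apply/eqP; apply: contraT => eta_neq0.
have [k eta_k kmin] : exists2 k, eta`_k != 0 & forall i, (i < k)%N -> eta`_i = 0.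
  have ex : exists i, eta`_i != 0.
    by exists (size eta).-1; rewrite -lead_coefE lead_coef_eq0.
  case: (ex_minnP ex) => k eta_k kmin; exists k => // i lt_ik; apply/eqP.
  by apply: contraTT lt_ik => /kmin; rewrite -leqNgt.
have k_gt0 : (0 < k)%N by case: k eta_k {kmin} => //; rewrite eta0 eqxx.
(* Coefficient [k-1]: [phi_0 * k * eta_k] on the left, [0] on the right. *)
have := congr1 (fun p : {poly R} => p`_k.-1) W; rewrite /= !coefM.
rewrite [RHS]big1 => [|i _]; last by rewrite kmin ?mul0r //; have := ltn_ord i; lia.
rewrite big_ord_recl /= big1 => [|i _]; last first.
  by rewrite coef_deriv kmin ?mul0rn ?mulr0 // /bump /=; have := ltn_ord i; lia.
rewrite addr0 subn0 coef_deriv prednK // => /eqP.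
by rewrite -mulr_natr !mulf_eq0 (negbTE phi0) (negbTE eta_k) R0 eqn0Ngt k_gt0.
Qed.

Section Wronskian.
Variables (K : fieldType) (n : nat).
Hypothesis K0 : [pchar K] =i pred0.

Lemma mpoly_wronskian_proportional (F G : {mpoly K[n]}) : F != 0 ->
  (forall l, F * G^`M(l) = G * F^`M(l)) -> exists c, G = c *: F.
Proof.
move=> F_neq0 W; have nonroot := mpoly_nonroot (pchar0_poly_nonroot K0).
have [a Fa_neq0] := nonroot _ _ F_neq0.
pose c := G.@[a] / F.@[a]; pose H := G - c *: F; exists c.
apply/eqP; rewrite -subr_eq0 -/H; apply: contraT => H_neq0.
have [p Hp_neq0] := nonroot _ _ H_neq0.
have WH l : F * H^`M(l) = H * F^`M(l).
  by rewrite /H mderivB mderivZ mulrBr mulrBl -scalerAr -scalerAl W.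
pose line := restr_line a (fun i => p i - a i).
have line0 E : (line E)`_0 = E.@[a].
  by rewrite -horner_coef0 horner_restr_line; apply: meval_eq => i; rewrite mul0r addr0.
have line1 : (line H).[1] = H.@[p].
  by rewrite horner_restr_line; apply: meval_eq => i; rewrite mul1r addrC subrK.
have : line H = 0.
  apply: (@wronskian0_eq0 _ (line F)) => //; rewrite ?line0 //.
    by rewrite /H mevalB mevalZ divfK // subrr.
  rewrite !deriv_restr_line !big_distrr; apply: eq_bigr => l _.
  by rewrite /= mulrCA -rmorphM WH rmorphM mulrCA.
by move=> lineH0; move: Hp_neq0; rewrite -line1 lineH0 horner0 eqxx.
Qed.

Lemma exists_wronskian_neq0 (F G : {mpoly K[n]}) :
  F != 0 -> (forall c, G != c *: F) ->
  exists q l, F.@[q] * (G^`M(l)).@[q] != G.@[q] * (F^`M(l)).@[q].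
Proof.
move=> F_neq0 G_notF.
have [/existsP [l W_neq0] | /existsPn W0] :=
  boolP [exists l, F * G^`M(l) - G * F^`M(l) != 0].
  have [q] := mpoly_nonroot (pchar0_poly_nonroot K0) W_neq0.
  by rewrite mevalB !mevalM subr_eq0 => Wq; exists q, l.
have [|c G_eq] := mpoly_wronskian_proportional (G := G) F_neq0.
  by move=> l; apply/eqP; rewrite -subr_eq0; apply/negPn/W0.
by have := G_notF c; rewrite G_eq eqxx.
Qed.

End Wronskian.

(** * Common kernels of linear functionals *)

Lemma dim_ffun (K : fieldType) (I : finType) : dim {ffun I -> K^o} = #|I|.
Proof. exact: muln1. Qed.

Lemma lfunE_linear (K : fieldType) (V W : vectType K) (f : V -> W) :
  linear f -> linfun f =1 f.
Proof.
move=> f_linear.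
exact: (lfunE (HB.pack f (GRing.isLinear.Build K V W *:%R f f_linear) : {linear V -> W})).
Qed.

Definition common_kernel (K : fieldType) (V : vectType K) (J : finType)
    (psi : J -> V -> K) : {vspace V} :=
  lker (linfun (fun v => [ffun j => psi j v] : {ffun J -> K^o})).

Section CommonKernel.
Variables (K : fieldType) (V : vectType K) (J : finType) (psi : J -> V -> K).
Hypothesis psi_linear : forall j, linear_for *%R (psi j).

Lemma eval_family_linear (I : finType) (js : I -> J) :
  linear (fun v => [ffun i => psi (js i) v] : {ffun I -> K^o}).
Proof. by move=> c u v; apply/ffunP => i; rewrite !ffunE psi_linear. Qed.

Lemma common_kernelP v : reflect (forall j, psi j v = 0) (v \in common_kernel psi).
Proof.
rewrite memv_ker (lfunE_linear (eval_family_linear id)).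
apply: (iffP eqP) => [/ffunP v0 j | v0]; first by have := v0 j; rewrite !ffunE.
by apply/ffunP => j; rewrite !ffunE v0.
Qed.

Lemma dim_common_kernel : (dim V - #|J| <= \dim (common_kernel psi))%N.
Proof.
rewrite /common_kernel; set T := linfun _; have := limg_ker_dim T fullv.
by have := dimvS (subvf (T @: fullv)); rewrite capfv !dimvf dim_ffun; lia.
Qed.

Lemma dim_common_kernel_det r (js : 'I_r -> J) (us : 'I_r -> V) :
  \det (\matrix_(a, b) psi (js a) (us b)) != 0 ->
  (\dim (common_kernel psi) + r <= dim V)%N.
Proof.
set A := \matrix_(a, b) _ => detA.
pose T := linfun (fun v => [ffun a => psi (js a) v] : {ffun 'I_r -> K^o}).
have TE v : T v = [ffun a => psi (js a) v] := lfunE_linear (eval_family_linear js) v.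
(* The [r] functionals are independent on the span of [us], so [T] maps onto [K^r]. *)
have T_onto : (T @: fullv = fullv)%VS.
  apply/eqP; rewrite eqEsubv subvf; apply/subvP => y _.
  pose z : 'cV[K]_r := \col_a y a; pose x := invmx A *m z.
  suff -> : y = T (\sum_b x b 0 *: us b) by apply: memv_img; apply: memvf.
  apply/ffunP => a; rewrite linear_sum sum_ffunE.
  have A_unit : A \in unitmx by rewrite unitmxE unitfE.
  have := congr1 (fun M : 'cV[K]_r => M a 0) (mulKVmx A_unit z).
  rewrite /= [X in _ = X]mxE => <-; rewrite mxE.
  by apply: eq_bigr => b _; rewrite linearZ_LR ffunE [_ (us b)]TE ffunE !mxE mulrC.
have := limg_ker_dim T fullv; rewrite capfv T_onto !dimvf dim_ffun card_ord => <-.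
rewrite leq_add2r dimvS //; apply/subvP => v /common_kernelP v0.
by rewrite memv_ker TE; apply/eqP/ffunP => a; rewrite !ffunE v0.
Qed.

End CommonKernel.

Section Triangular.
Variables (K : nmodType) (J V : Type) (psi : J -> V -> K).

Definition triangular r (js : 'I_r -> J) (us : 'I_r -> V) :=
  (forall a b : 'I_r, (a < b)%N -> psi (js a) (us b) = 0) /\
  (forall a, psi (js a) (us a) != 0).

Definition ord_cat (T : Type) r1 r2 (f : 'I_r1 -> T) (g : 'I_r2 -> T)
    (a : 'I_(r1 + r2)) : T :=
  match split a with inl a1 => f a1 | inr a2 => g a2 end.

Lemma forall_ord_cat (T : Type) (p : T -> Prop) r1 r2 (f : 'I_r1 -> T) (g : 'I_r2 -> T) :
  (forall a, p (f a)) -> (forall a, p (g a)) -> forall a, p (ord_cat f g a).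
Proof. by move=> pf pg a; rewrite /ord_cat; case: splitP. Qed.

Lemma triangular_cat r1 r2 (js1 : 'I_r1 -> J) (us1 : 'I_r1 -> V)
    (js2 : 'I_r2 -> J) (us2 : 'I_r2 -> V) :
  triangular js1 us1 -> triangular js2 us2 ->
  (forall a b, psi (js1 a) (us2 b) = 0) ->
  triangular (ord_cat js1 js2) (ord_cat us1 us2).
Proof.
move=> [up1 diag1] [up2 diag2] up12; split => [a b|a]; rewrite /ord_cat; last first.
  by case: splitP => a' _; [apply: diag1 | apply: diag2].
case: splitP => a' ->; case: splitP => b' -> lt_ab //; first exact: up1.
  by have := ltn_ord b'; lia.
by apply: up2; lia.
Qed.

Lemma triangular1 j u : psi j u != 0 -> triangular (fun _ : 'I_1 => j) (fun _ => u).
Proof. by split => [a b|//]; rewrite !ord1. Qed.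

Lemma triangular2 j1 j2 u1 u2 :
  psi j1 u1 != 0 -> psi j2 u2 != 0 -> psi j1 u2 = 0 ->
  triangular (tnth [tuple j1; j2]) (tnth [tuple u1; u2]).
Proof. by split => [[[|[|]]] // ? [[|[|]]] |[[|[|]]]]. Qed.

End Triangular.

Lemma det_triangular_neq0 (K : idomainType) (J V : Type) (psi : J -> V -> K) r js us :
  triangular psi js us -> \det (\matrix_(a < r, b < r) psi (js a) (us b)) != 0.
Proof.
move=> [up diag]; rewrite det_trig; last by apply/is_trig_mxP => a b lt_ab; rewrite mxE up.
by apply/prodf_neq0 => a _; rewrite mxE.
Qed.

Lemma triangular_extend (K : fieldType) (V : vectType K) (J : finType)
    (psi psi' : J -> V -> K) r1 r2 (js1 : 'I_r1 -> J) (us1 : 'I_r1 -> V)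
    (js2 : 'I_r2 -> J) (us2 : 'I_r2 -> V) :
  (forall j, linear_for *%R (psi j)) -> triangular psi js1 us1 ->
  (forall a v, psi' (js1 a) v = psi (js1 a) v) ->
  (forall b, us2 b \in common_kernel (fun a => psi (js1 a))) ->
  triangular psi' js2 us2 -> triangular psi' (ord_cat js1 js2) (ord_cat us1 us2).
Proof.
move=> psi_linear [up1 diag1] eq_psi us2_ker tri2; apply: triangular_cat tri2 _ => [|a b].
  by split=> [a b|a]; rewrite !eq_psi; [apply: up1 | apply: diag1].
by rewrite eq_psi; move/(common_kernelP (fun a => psi_linear (js1 a))): (us2_ker b); apply.
Qed.

(** * Derivatives of homogeneous polynomials *)

Section Euler.
Variables (R : comNzRingType) (n : nat).
Implicit Types (F : {mpoly R[n]}) (x : 'I_n -> R).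

Lemma euler_monomial (m : 'X_{1..n}) x :
  \sum_l x l * (('X_[m] : {mpoly R[n]})^`M(l)).@[x] = (mdeg m)%:R * ('X_[m]).@[x].
Proof.
rewrite mdegE natr_sum mulr_suml; apply: eq_bigr => l _.
rewrite mderivX mevalZ; have [->|m_l_gt0] := posnP (m l); first by rewrite !mul0r mulr0.
have -> : 'X_[m] = 'X_l * 'X_[m - U_(l)] :> {mpoly R[n]}.
  rewrite -mpolyXD addmC submK //; apply/mnm_lepP => i.
  by rewrite mnm1E; case: eqP => [<-|].
by rewrite mevalM mevalXU; ring.
Qed.

Lemma euler_homog d F x : F \is d.-homog ->
  \sum_l x l * (F^`M(l)).@[x] = d%:R * F.@[x].
Proof.
move=> /dhomog_mf homF; rewrite (mpolyE F).
under eq_bigr => l _ do rewrite (raddf_sum (mderiv l)) raddf_sum /= mulr_sumr.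
rewrite exchange_big raddf_sum /= mulr_sumr !big_seq; apply: eq_bigr => m supp_m.
under eq_bigr => l _ do rewrite mderivZ mevalZ mulrCA.
by rewrite -mulr_sumr euler_monomial homF // mevalZ mulrCA.
Qed.

Lemma mderivm_homog d F (a : 'X_{1..n}) :
  F \is d.-homog -> F^`M[a] \is (d - mdeg a).-homog.
Proof.
move=> /dhomog_mf homF; rewrite (mpolyE F) raddf_sum big_seq /=.
apply: rpred_sum => m supp_m; rewrite mderivmZ mderivmX scalerA.
have [le_am | not_le_am] := boolP (a <= m)%MM.
  apply: dhomogZ; rewrite dhomogX /=; apply/eqP; have /= := homF m supp_m.
  by have := mdegD (m - a) a; rewrite submK //; lia.
have [i lt_mi] : exists i, (m i < a i)%N.
  apply/existsP; apply: contraNT not_le_am => /existsPn le_am.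
  by apply/mnm_lepP => i; rewrite leqNgt le_am.
by rewrite (bigD1 i) //= ffact_small // mul0n mulr0 scale0r rpred0.
Qed.

Lemma euler_mderivm d F (a : 'X_{1..n}) x : F \is d.-homog ->
  (d - mdeg a)%:R * (F^`M[a]).@[x] = \sum_l x l * (F^`M[a + U_(l)]).@[x].
Proof.
move=> /(mderivm_homog a)/(euler_homog x) <-.
by apply: eq_bigr => l _; rewrite mderivmDm mderivmU1m.
Qed.

End Euler.

Lemma mderivm_eq0_from_top (R : idomainType) n d e (F : {mpoly R[n]}) x :
  [pchar R] =i pred0 -> F \is d.-homog -> (e <= d)%N ->
  (forall a, mdeg a = e -> (F^`M[a]).@[x] = 0) ->
  forall a, (mdeg a <= e)%N -> (F^`M[a]).@[x] = 0.
Proof.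
move=> /pcharf0P R0 homF le_ed top.
suff deg_k k a : (mdeg a + k)%N = e -> (F^`M[a]).@[x] = 0.
  by move=> a le_ae; apply: (deg_k (e - mdeg a)%N); rewrite subnKC.
elim: k a => [|k IH] a deg_a; first by apply: top; rewrite -deg_a addn0.
have : (d - mdeg a)%:R * (F^`M[a]).@[x] = 0.
  rewrite (euler_mderivm _ _ homF) big1 // => l _.
  by rewrite IH ?mulr0 // mdegD mdeg1 -deg_a; lia.
by move/eqP; rewrite mulf_eq0 R0 subn_eq0 => /orP[|/eqP//]; lia.
Qed.

Lemma mdeg_eq_exists_lt n (a a' : 'X_{1..n}) :
  mdeg a = mdeg a' -> a != a' -> exists i, (a' i < a i)%N.
Proof.
move=> deg_eq neq_aa'.
have [/existsP[i lt_i]|/existsPn no_lt] := boolP [exists i, (a' i < a i)%N]; first by exists i.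
have le_aa' : (a <= a')%MM by apply/mnm_lepP => i; rewrite leqNgt no_lt.
have /eqP : mdeg (a' - a) = 0%N by have := mdegD (a' - a) a; rewrite submK //; lia.
by rewrite mdeg_eq0 => /eqP da; move: neq_aa'; rewrite -(submK le_aa') da add0m eqxx.
Qed.

Definition unitv (R : nzSemiRingType) n (l : 'I_n) : 'I_n -> R := fun i => (i == l)%:R.

Section MonomialAtUnit.
Variables (R : comNzRingType) (n : nat) (l : 'I_n).

Lemma mderivm_monomial_unitv_eq0 a a' c : mdeg a = mdeg a' -> a != a' ->
  (('X_[a' + U_(l) *+ c] : {mpoly R[n]})^`M[a]).@[unitv R l] = 0.
Proof.
move=> deg_eq neq_aa'; rewrite mderivmX mevalZ mevalX.
have off_l i : i != l -> (a' + U_(l) *+ c)%MM i = a' i.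
  by move=> neq_il; rewrite mnmDE mulmnE mnm1E eq_sym (negbTE neq_il) mul0n addn0.
have [i lt_i] := mdeg_eq_exists_lt deg_eq neq_aa'.
have [j lt_j] : exists j, (a j < a' j)%N by apply: mdeg_eq_exists_lt; rewrite // eq_sym.
have [eq_il | neq_il] := eqVneq i l; last first.
  by rewrite (bigD1 i) //= ffact_small ?off_l // mul0n mul0r.
have neq_jl : j != l by apply: contraTneq lt_j => ->; rewrite -eq_il -leqNgt ltnW.
rewrite [X in _ * X](bigD1 j) //= /unitv (negbTE neq_jl) mnmBE off_l // expr0n subn_eq0.
by rewrite leqNgt lt_j mul0r mulr0.
Qed.

End MonomialAtUnit.

Lemma mderivm_monomial_unitv_neq0 (R : idomainType) n (l : 'I_n) a c :
  [pchar R] =i pred0 ->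
  (('X_[a + U_(l) *+ c] : {mpoly R[n]})^`M[a]).@[unitv R l] != 0.
Proof.
move=> /pcharf0P R0; rewrite mderivmX mevalZ mevalX addmC addmK.
rewrite [X in _ * X]big1 => [|i _]; last first.
  by rewrite mulmnE mnm1E /unitv eq_sym; case: eqP; rewrite ?expr1n ?mul0n ?expr0.
by rewrite mulr1 R0 -lt0n prodn_gt0 // => i; rewrite ffact_gt0 mnmDE leq_addl.
Qed.

Lemma card_mdeg_eq n b e : (e < b)%N ->
  #|[pred a : 'X_{1..n.+1 < b} | mdeg a == e]| = 'C(e + n, e).
Proof.
move=> lt_eb; rewrite -size_basis cardE -(size_map val); apply: perm_size.
apply: uniq_perm; [by rewrite map_inj_uniq ?enum_uniq //; apply: val_inj | exact: uniq_basis|].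
move=> a; rewrite -basis_cover; apply/mapP/idP => [[a' + ->]|deg_a].
  by rewrite mem_enum inE.
have lt_ab : (mdeg a < b)%N by rewrite (eqP deg_a).
by exists (BMultinom lt_ab); rewrite ?mem_enum ?inE.
Qed.

(** * Forms of degree d and the conditions imposed by X *)

Section Forms.
Variables (k : fieldType) (d : nat).
Implicit Types (c : {ffun hmon d -> k^o}) (mu : hmon d).

Lemma form_of_is_linear : linear (@form_of k d).
Proof.
move=> a c1 c2; rewrite /form_of scaler_sumr -big_split /=; apply: eq_bigr => mu _.
by rewrite !ffunE scalerDl scalerA.
Qed.

HB.instance Definition _ :=
  GRing.isLinear.Build k {ffun hmon d -> k^o} {mpoly k[3]} _ (@form_of k d)
    form_of_is_linear.

Lemma form_of_homog c : form_of c \is d.-homog.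
Proof. by apply: rpred_sum => mu _; apply: dhomogZ; rewrite dhomogX; case: mu. Qed.

Lemma mcoeff_form_of c mu : (form_of c)@_(val (val mu)) = c mu.
Proof.
rewrite raddf_sum (bigD1 mu) //= mcoeffZ mcoeffX eqxx mulr1 big1 ?addr0 // => nu neq_nu.
by rewrite mcoeffZ mcoeffX val_eqE val_eqE (negbTE neq_nu) mulr0.
Qed.

Lemma form_of_inj : injective (@form_of k d).
Proof. by move=> c1 c2 eq_c; apply/ffunP => mu; rewrite -!mcoeff_form_of eq_c. Qed.

Definition hmon_vec mu : {ffun hmon d -> k^o} := [ffun nu => (nu == mu)%:R].

Lemma form_of_hmon_vec mu : form_of (hmon_vec mu) = 'X_[val (val mu)].
Proof.
rewrite /form_of (bigD1 mu) //= ffunE eqxx scale1r big1 ?addr0 // => nu neq_nu.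
by rewrite ffunE (negbTE neq_nu) scale0r.
Qed.

End Forms.

Lemma card_hmon d : #|{: hmon d}| = 'C(d.+2, 2).
Proof.
by rewrite card_sig card_mdeg_eq // -[in RHS]addn2 -(bin_sub (leq_addl d 2)) addnK.
Qed.

Definition top_index m := {a : 'X_{1..3 < m} | (mdeg a).+1 == m}.

Lemma card_top_index m : #|{: top_index m}| = 'C(m.+1, 2).
Proof.
case: m => [|m]; rewrite card_sig.
  by apply: eq_card0 => a; have := bmdeg a.
rewrite (eq_card (B := [pred a : 'X_{1..3 < m.+1} | mdeg a == m])) => [|a]; last first.
  by rewrite !inE eqSS.
by rewrite card_mdeg_eq // -[in RHS]addn2 -(bin_sub (leq_addl m 2)) addnK.
Qed.

Section Conditions.
Variables (k : fieldType) (d m s : nat) (P : vec3 k) (Q V : 'I_s -> vec3 k).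

Definition cond_lin (j : cond m s) (c : {ffun hmon d -> k^o}) : k :=
  cond_val P Q V (form_of c) j.

Lemma cond_lin_linear j : linear_for *%R (cond_lin j).
Proof.
move=> a c1 c2; rewrite /cond_lin linearP; case: j => [al|[i []]] /=.
- by rewrite mderivmD mderivmZ mevalD mevalZ.
- rewrite mulr_sumr -big_split /=; apply: eq_bigr => l _.
  by rewrite mderivD mderivZ mevalD mevalZ; ring.
- by rewrite mevalD mevalZ.
Qed.

Lemma h0_IXE : h0_IX d m s P Q V = \dim (common_kernel cond_lin).
Proof. by []. Qed.

Lemma h0_IX_ge : [pchar k] =i pred0 -> (m <= d.+1)%N ->
  ('C(d.+2, 2) - ('C(m.+1, 2) + 2 * s) <= h0_IX d m s P Q V)%N.
Proof.
move=> k0 le_md.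
pose top_or_dot (j : top_index m + 'I_s * bool) : cond m s :=
  match j with inl a => inl (val a) | inr dot => inr dot end.
have := dim_common_kernel (fun j => cond_lin (top_or_dot j)).
rewrite dim_ffun card_sum card_prod !card_ord card_bool card_hmon card_top_index mulnC.
move/leq_trans; apply; rewrite h0_IXE; apply/dimvS/subvP => c.
move/(common_kernelP (fun j => cond_lin_linear _)) => top0.
apply/(common_kernelP cond_lin_linear) => -[a | dot]; last exact: (top0 (inr dot)).
have m_gt0 : (0 < m)%N by have := bmdeg a; lia.
apply: (mderivm_eq0_from_top k0 (form_of_homog c) (e := m.-1)) => [|a' deg_a'|].
- by lia.
- have lt_a'm : (mdeg a' < m)%N by lia.
  have top_a' : (mdeg (BMultinom lt_a'm)).+1 == m by rewrite /= deg_a' prednK.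
  exact: (top0 (inl (Sub (BMultinom lt_a'm) top_a'))).
- by have := bmdeg a; lia.
Qed.

End Conditions.

(** * A configuration imposing independent conditions *)

Section UpdateDot.
Variables (k : fieldType) (d m s : nat) (P : vec3 k).
Implicit Types (Q V : 'I_s -> vec3 k) (c : {ffun hmon d -> k^o}).

Definition dots_below (t : nat) (j : cond m s) : bool :=
  if j is inr (i, _) then (i < t)%N else true.

Lemma dots_belowS t j : dots_below t j -> dots_below t.+1 j.
Proof. by case: j => [//|[i ?]] /ltnW. Qed.

Definition upd (Q : 'I_s -> vec3 k) (t : nat) (q : vec3 k) : 'I_s -> vec3 k :=
  fun i => if val i == t then q else Q i.

Lemma cond_lin_upd Q V t q v j c : dots_below t j ->
  cond_lin P (upd Q t q) (upd V t v) j c = cond_lin P Q V j c.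
Proof. by case: j => [//|[i []]] /= lt_it; rewrite /cond_lin /= /upd ltn_eqF. Qed.

Lemma cond_lin_upd_point Q V (i : 'I_s) q v c :
  cond_lin P (upd Q i q) (upd V i v) (inr (i, false) : cond m s) c = (form_of c).@[q].
Proof. by rewrite /cond_lin /= /upd eqxx. Qed.

Lemma cond_lin_upd_tangent Q V (i : 'I_s) q l c :
  cond_lin P (upd Q i q) (upd V i (unitv k l)) (inr (i, true) : cond m s) c =
  ((form_of c)^`M(l)).@[q].
Proof.
rewrite /cond_lin /= /upd eqxx (bigD1 l) //= /unitv eqxx mul1r big1 ?addr0 // => l' neq_l'l.
by rewrite (negbTE neq_l'l) mul0r.
Qed.

End UpdateDot.

Section Blocks.
Variables (k : fieldType) (d : nat).
Hypothesis k0 : [pchar k] =i pred0.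
Implicit Types (U : {vspace {ffun hmon d -> k^o}}).

Lemma point_block U : U != 0%VS -> exists f q, f \in U /\ (form_of f).@[q] != 0.
Proof.
move=> U_neq0; have f_neq0 : vpick U != 0 by rewrite vpick0.
have [|q fq] := mpoly_nonroot (pchar0_poly_nonroot k0) (p := form_of (vpick U)).
  by apply: contraNneq f_neq0 => f0; apply/eqP/form_of_inj; rewrite f0 linear0.
by exists (vpick U), q; rewrite memv_pick.
Qed.

(* At a point [q] and a direction [l] where the Wronskian of two independent forms [f] and [g]
   does not vanish, the combination of [f] and [g] vanishing at [q] has a nonzero derivative
   along [l]. *)
Lemma dot_block U : (1 < \dim U)%N -> exists u1 u2 q l,
  [/\ u1 \in U, u2 \in U, (form_of u1).@[q] != 0, (form_of u2).@[q] = 0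
    & ((form_of u2)^`M(l)).@[q] != 0].
Proof.
move=> dimU; set f := vpick U.
have f_neq0 : f != 0 by rewrite vpick0 -dimv_eq0 -lt0n ltnW.
have [g gU g_notin] : exists2 g, g \in U & g \notin <[f]>%VS.
  apply/subvPn; apply: contraTN dimU => /dimvS; rewrite dim_vline f_neq0 => ?; lia.
set F := form_of f; set G := form_of g.
have [q [l W_neq0]] : exists q l, F.@[q] * (G^`M(l)).@[q] != G.@[q] * (F^`M(l)).@[q].
  apply: exists_wronskian_neq0 => // [|c]; last first.
    apply: contraNneq g_notin => GcF.
    by rewrite (@form_of_inj _ _ g (c *: f)) ?memvZ ?memv_line // linearZ.
  by apply: contraNneq f_neq0 => F0; apply/eqP/form_of_inj; rewrite -/F F0 linear0.
exists (if F.@[q] != 0 then f else g), (G.@[q] *: f - F.@[q] *: g), q, l; split.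
- by case: ifP; rewrite ?memv_pick.
- by rewrite memvB ?memvZ ?memv_pick.
- case: ifPn => // /negPn/eqP F0; apply: contraNneq W_neq0 => G0.
  by rewrite F0 -/G G0 !mul0r.
- by rewrite raddfB /= !linearZ /= -/F -/G mevalD !mevalZ mevalN mulrN mulrC subrr.
- rewrite raddfB /= !linearZ /= -/F -/G mderivD !mderivZ mderivN.
  by rewrite mevalD !mevalZ mevalN mulrN subr_eq0 eq_sym.
Qed.

End Blocks.

Section Greedy.
Variables (k : fieldType) (d m s : nat).
Hypotheses (k0 : [pchar k] =i pred0) (le_md : (m <= d.+1)%N).
Local Notation W := {ffun hmon d -> k^o}.

Definition P0 : vec3 k := unitv k ord0.

Lemma mdeg_top_monomial (a : top_index m) : mdeg (val a + U_(ord0) *+ (d - m.-1))%MM = d.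
Proof. by have /eqP := valP a; rewrite mdegD mdegMn mdeg1 mul1n; lia. Qed.

Fact top_monomial_bounded (a : top_index m) :
  (mdeg (val a + U_(ord0) *+ (d - m.-1))%MM < d.+1)%N.
Proof. by rewrite mdeg_top_monomial. Qed.

Definition top_monomial (a : top_index m) : hmon d :=
  Sub (BMultinom (top_monomial_bounded a)) (introT eqP (mdeg_top_monomial a)).

Definition top_cond (a : 'I_#|{: top_index m}|) : cond m s := inl (val (enum_val a)).

Definition top_vec (a : 'I_#|{: top_index m}|) : W :=
  hmon_vec k (top_monomial (enum_val a)).

Lemma top_triangular (Q V : 'I_s -> vec3 k) :
  triangular (cond_lin P0 Q V) top_cond top_vec.
Proof.
split=> [a b lt_ab|a]; rewrite /cond_lin /= form_of_hmon_vec /=; last first.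
  exact: mderivm_monomial_unitv_neq0.
apply: mderivm_monomial_unitv_eq0.
  have /eqP deg_a := valP (enum_val a); have /eqP deg_b := valP (enum_val b).
  exact: succn_inj (etrans deg_a (esym deg_b)).
by rewrite !val_eqE (inj_eq enum_val_inj) neq_ltn lt_ab.
Qed.

Definition greedy_inv t :=
  exists (Q V : 'I_s -> vec3 k) r (js : 'I_r -> cond m s) (us : 'I_r -> W),
  [/\ r = minn 'C(d.+2, 2) ('C(m.+1, 2) + 2 * t), forall a, dots_below t (js a)
    & triangular (cond_lin P0 Q V) js us].

Lemma greedy_inv0 : greedy_inv 0.
Proof.
exists (fun _ _ => 0), (fun _ _ => 0), _, top_cond, top_vec; split=> //.
  by rewrite card_top_index muln0 addn0; apply/esym/minn_idPr/leq_bin2l.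
exact: top_triangular.
Qed.

Lemma greedy_invS t : (t < s)%N -> greedy_inv t -> greedy_inv t.+1.
Proof.
move=> lt_ts [Q [V [r [js [us [r_eq below tri]]]]]]; pose i : 'I_s := Ordinal lt_ts.
have [full | not_full] := leqP 'C(d.+2, 2) ('C(m.+1, 2) + 2 * t).
  by exists Q, V, r, js, us; split=> [|a|//]; [rewrite r_eq; lia | apply/dots_belowS].
pose U := common_kernel (fun a => @cond_lin k d m s P0 Q V (js a)).
have dimU : ('C(d.+2, 2) - r <= \dim U)%N.
  have := dim_common_kernel (fun a => @cond_lin k d m s P0 Q V (js a)).
  by rewrite dim_ffun card_hmon card_ord.
have extend r2 (js2 : 'I_r2 -> cond m s) (us2 : 'I_r2 -> W) q v :
    (forall b, us2 b \in U) -> (forall a, dots_below t.+1 (js2 a)) ->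
    triangular (cond_lin P0 (upd Q i q) (upd V i v)) js2 us2 ->
    (r + r2 = minn 'C(d.+2, 2) ('C(m.+1, 2) + 2 * t.+1))%N -> greedy_inv t.+1.
  move=> us2U below2 tri2 r_eq'.
  exists (upd Q i q), (upd V i v), _, (ord_cat js js2), (ord_cat us us2); split=> //.
    by apply: (forall_ord_cat (p := dots_below t.+1)) => // a; apply/dots_belowS.
  apply: triangular_extend (@cond_lin_linear k d m s P0 Q V) tri _ us2U tri2.
  by move=> a c; apply: cond_lin_upd.
have [one_left | two_left] := leqP 'C(d.+2, 2) ('C(m.+1, 2) + 2 * t).+1.
  have [|f [q [fU fq]]] := point_block k0 (U := U).
    by rewrite -dimv_eq0 -lt0n; apply: leq_trans dimU; lia.
  apply: (extend 1%N (fun _ => inr (i, false)) (fun _ => f) q (fun _ => 0)) => //.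
  - by move=> _; rewrite /= ltnSn.
  - by apply: triangular1; rewrite cond_lin_upd_point.
  - lia.
have [|u1 [u2 [q [l [u1U u2U u1q u2q u2l]]]]] := dot_block k0 (U := U).
  by apply: leq_trans dimU; lia.
apply: (extend 2%N (tnth [tuple inr (i, false); inr (i, true)]) (tnth [tuple u1; u2]) q
  (unitv k l)).
- by case=> [[|[|]]].
- by case=> [[|[|]]] //= *; rewrite ltnSn.
- by apply: triangular2; rewrite ?cond_lin_upd_point ?cond_lin_upd_tangent.
- lia.
Qed.

Lemma greedy_inv_all : greedy_inv s.
Proof.
elim: {1 3}s (leqnn s) => [|t IH] le_ts; first exact: greedy_inv0.
exact: greedy_invS (IH (ltnW le_ts)).
Qed.

End Greedy.

(** * The parameter space *)

Lemma cond_val_eq (k : fieldType) m s (P P' : vec3 k) (Q Q' V V' : 'I_s -> vec3 k) F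
    (j : cond m s) :
  P =1 P' -> (forall i, Q i =1 Q' i) -> (forall i, V i =1 V' i) ->
  cond_val P Q V F j = cond_val P' Q' V' F j.
Proof.
move=> eqP eqQ eqV; case: j => [a|[i []]] /=; try exact: meval_eq.
by apply: eq_bigr => l _; rewrite eqV (meval_eq _ (eqQ i)).
Qed.

Section ParameterSpace.
Variables (k : fieldType) (s : nat).
Local Notation n := (6 * s + 2).+1.

Definition par_tuple (o : nat) : 3.-tuple {mpoly k[n]} := [tuple 'X_(inord (o + l)) | l < 3].

Definition cond_poly m (F : {mpoly k[3]}) (j : cond m s) : {mpoly k[n]} :=
  match j with
  | inl a => F^`M[(a : 'X_{1..3})] \mPo par_tuple 0
  | inr (i, false) => F \mPo par_tuple (3 + 6 * i)
  | inr (i, true) =>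
      \sum_(l < 3) 'X_(inord (6 + 6 * i + l)) * (F^`M(l) \mPo par_tuple (3 + 6 * i))
  end.

Lemma meval_par_tuple x o F : (F \mPo par_tuple o).@[x] = F.@[fun l => x (inord (o + l))].
Proof. by rewrite comp_mpoly_meval; apply: meval_eq => l; rewrite tnth_mktuple mevalXU. Qed.

Lemma cond_poly_meval m x F (j : cond m s) :
  (cond_poly F j).@[x] = cond_val (par_P x) (par_Q x) (par_V x) F j.
Proof.
case: j => [a|[i []]] /=; rewrite ?meval_par_tuple //.
by rewrite raddf_sum; apply: eq_bigr => l _; rewrite /= mevalM mevalXU meval_par_tuple.
Qed.

Lemma par_surj (P : vec3 k) (Q V : 'I_s -> vec3 k) :
  exists x, [/\ par_P x =1 P, forall i, par_Q x i =1 Q i & forall i, par_V x i =1 V i].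
Proof.
pose x (o : 'I_n) := let t := (o - 3)%N in
  if (o < 3)%N then P (inord o) else
  oapp (fun i : 'I_s =>
          if (t %% 6 < 3)%N then Q i (inord (t %% 6)) else V i (inord (t %% 6 - 3)))
    0 (insub (t %/ 6)%N).
have x_dot (i : 'I_s) (o : nat) : (o < 6)%N ->
    x (inord (3 + 6 * i + o)) = if (o < 3)%N then Q i (inord o) else V i (inord (o - 3)).
  move=> lt_o6; have lt_is := ltn_ord i; rewrite /x inordK; last by lia.
  have -> : (3 + 6 * i + o < 3)%N = false by lia.
  rewrite -addnA addKn mulnC divnMDl // modnMDl divn_small // modn_small // addn0.
  by rewrite valK.
exists x; split=> [j | i j | i j].
- by rewrite /par_P /x inordK ?ltn_ord ?inord_val //; have := ltn_ord j; lia.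
- by rewrite /par_Q x_dot ?inord_val ?ltn_ord // (ltn_trans (ltn_ord j)).
- rewrite /par_V (_ : 6 + 6 * i + j = 3 + 6 * i + (3 + j))%N; last by lia.
  by rewrite x_dot ?addKn ?inord_val //; have := ltn_ord j; lia.
Qed.

Definition cond_det d m r (js : 'I_r -> cond m s) (us : 'I_r -> {ffun hmon d -> k^o}) :
  {mpoly k[n]} := \det (\matrix_(a, b) cond_poly (form_of (us b)) (js a)).

Lemma cond_det_meval d m r (js : 'I_r -> cond m s) (us : 'I_r -> {ffun hmon d -> k^o}) x :
  (cond_det js us).@[x] =
  \det (\matrix_(a, b) cond_lin (par_P x) (par_Q x) (par_V x) (js a) (us b)).
Proof.
rewrite /cond_det -det_map_mx; congr (\det _); apply/matrixP => a b.
by rewrite !mxE /= cond_poly_meval.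
Qed.

End ParameterSpace.

Unset Implicit Arguments.

Theorem lemma2p6 (k : closedFieldType) (char0 : [pchar k] =i pred0)
    (s m d : nat) (hdm : (m <= d.+1)%N) :
  exists G : {mpoly k[(6 * s + 2).+1]}, G != 0 /\
    forall x : 'I_(6 * s + 2).+1 -> k, G.@[x] != 0 ->
      h0_IX d m s (par_P x) (par_Q x) (par_V x)
        = ('C(d.+2, 2) - 'C(m.+1, 2) - 2 * s)%N.
Proof.
have [Q [V [r [js [us [r_eq _ tri]]]]]] := greedy_inv_all s char0 hdm.
have [x0 [x0P x0Q x0V]] := par_surj (P0 k) Q V.
have G_x0 : (cond_det js us).@[x0] = \det (\matrix_(a, b) cond_lin (P0 k) Q V (js a) (us b)).
  rewrite cond_det_meval; congr (\det _); apply/matrixP => a b; rewrite !mxE.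
  exact: cond_val_eq.
exists (cond_det js us); split.
  have : (cond_det js us).@[x0] != 0 by rewrite G_x0; exact: det_triangular_neq0 tri.
  by apply: contraNneq => ->; rewrite meval0.
move=> x Gx; have := h0_IX_ge (par_P x) (par_Q x) (par_V x) char0 hdm.
have := dim_common_kernel_det (@cond_lin_linear _ d _ _ (par_P x) (par_Q x) (par_V x))
  (js := js) (us := us).
rewrite -cond_det_meval -h0_IXE dim_ffun card_hmon => /(_ Gx).
lia.
Qed.
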